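(* Let $N\ge 0$ be an integer, let $\mathcal{H}_N$ be a complex inner-product space of dimension $N+1$ with orthonormal basis $|\Psi_0\rangle,\dots,|\Psi_N\rangle$, and let $\beta_0,\dots,\beta_{N-1}>0$ be real numbers, with $\beta_N=0$. Let $\hat A$ be the linear operator on $\mathcal{H}_N$ defined by $\hat A|\Psi_0\rangle=0$ and $\hat A|\Psi_{n+1}\rangle=\sqrt{\beta_n}\,|\Psi_n\rangle$ for $0\le n\le N-1$, and let $\hat A^\dagger$ be its adjoint, so that $\hat A^\dagger|\Psi_n\rangle=\sqrt{\beta_n}\,|\Psi_{n+1}\rangle$ for $0\le n\le N-1$ and $\hat A^\dagger|\Psi_N\rangle=0$. Then for every integer $m\ge 0$, $$(\hat A+\hat A^\dagger)^m|\Psi_0\rangle=\sum_{l=0}^{[m/2]} c_{m,l}\,(\hat A^\dagger)^{m-2l}|\Psi_0\rangle,$$ where $[\cdot]$ denotes the integer part, $c_{m,0}=1$, and for $l\ge 1$ $$c_{m,l}=\sum_{s_1=0}^{s_0+1}\beta_{s_1}\sum_{s_2=0}^{s_1+1}\beta_{s_2}\cdots\sum_{s_l=0}^{s_{l-1}+1}\beta_{s_l},\qquad s_0\equiv m-2l-1,$$ i.e. $c_{m,l}=\sum_{s_1=0}^{m-2l}\beta_{s_1}\sum_{s_2=0}^{s_1+1}\beta_{s_2}\cdots\sum_{s_l=0}^{s_{l-1}+1}\beta_{s_l}$ (nested sums, each $\beta_{s_j}$ multiplying all inner sums).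
   Context: This is the abstract form of a boson interaction model: the interaction Hamiltonian restricted to a finite-dimensional invariant subspace is $\hat A+\hat A^\dagger$, where the ladder operator $\hat A$ acts by nearest-neighbour transitions with squared matrix elements $\beta_n$. Convention: $\beta_s$ is set to $0$ for all integers $s\ge N$ (such indices only occur in terms that multiply $(\hat A^\dagger)^{k}|\Psi_0\rangle$ with $k>N$, which is the zero vector). *)

(* The (N+1)-dimensional complex inner-product space with
   orthonormal basis Psi_0..Psi_N is modelled by column vectors 'cV[C]_(N.+1)
   over a numeric closed field C (e.g. complex numbers), Psi_n being the
   n-th standard basis vector; operators are matrices acting on the left. *)
From HB Require Import structures.
From mathcomp Require Import all_boot all_order all_algebra.
Set Implicit Arguments. Unset Strict Implicit. Unset Printing Implicit Defensive.
Import Order.TTheory GRing.Theory Num.Theory.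
Local Open Scope ring_scope.

Definition Psi {C : numClosedFieldType} (N n : nat) : 'cV[C]_(N.+1) :=
  delta_mx (inord n) 0.

(* adjoint w.r.t. the standard inner product (basis orthonormal):
   conjugate transpose *)
Definition adjoint {C : numClosedFieldType} (N : nat) (A : 'M[C]_(N.+1)) :
  'M[C]_(N.+1) := (map_mx Num.conj A)^T.

Fixpoint nested {C : numClosedFieldType} (beta : nat -> C) (k s : nat) : C :=
  match k with
  | 0 => 1
  | k'.+1 => \sum_(t < s.+2) beta t * nested beta k' t
  end.

Definition coef {C : numClosedFieldType} (beta : nat -> C) (m l : nat) : C :=
  match l with
  | 0 => 1
  | l'.+1 => \sum_(s1 < (m - 2 * l).+1) beta s1 * nested beta l' s1
  end.

From HB Require Import structures.
From mathcomp Require Import all_boot all_order all_algebra zify.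
Import Order.TTheory GRing.Theory Num.Theory.
Set Implicit Arguments. Unset Strict Implicit.
Local Open Scope ring_scope.

(* Write w_k = (A^dagger)^k Psi_0.  Then A^dagger w_k = w_(k+1), A w_0 = 0 and
   A w_(k+1) = beta_k w_k, and these relations alone determine (A + A^dagger)^m Psi_0:
   applying A + A^dagger to the expansion for m shows that the coefficients obey
   c_(m+1,l+1) = c_(m,l+1) + beta_(m-2l-1) c_(m,l), which is exactly what one gets
   by splitting off the last summand of the outermost of the nested sums. *)

Section LadderCoefficients.

Variables (R : pzSemiRingType) (beta : nat -> R).

(* [ladder_coef l j] is c_(j+2l,l): the coefficient is indexed by the exponent of A^dagger. *)
Fixpoint ladder_coef (l j : nat) : R :=
  if l is l'.+1 then \sum_(s < j.+1) beta s * ladder_coef l' s.+1 else 1.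

Lemma ladder_coefSS l j :
  ladder_coef l.+1 j.+1 = ladder_coef l.+1 j + beta j.+1 * ladder_coef l j.+2.
Proof. by rewrite /= big_ord_recr. Qed.

Lemma ladder_coefS0 l : ladder_coef l.+1 0 = beta 0 * ladder_coef l 1.
Proof. by rewrite /= big_ord1. Qed.

Definition ladder_coef_ext (m l : nat) : R :=
  if (2 * l <= m)%N then ladder_coef l (m - 2 * l) else 0.

Lemma ladder_coef_ext_addn l j : ladder_coef_ext (2 * l + j) l = ladder_coef l j.
Proof. by rewrite /ladder_coef_ext leq_addr addKn. Qed.

Lemma ladder_coef_ext_small m l : (m < 2 * l)%N -> ladder_coef_ext m l = 0.
Proof. by rewrite /ladder_coef_ext ltnNge => /negbTE->. Qed.

End LadderCoefficients.

Section LadderExpansion.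

Variables (R : comPzSemiRingType) (n : nat) (beta : nat -> R).
Variables (A B : 'M[R]_n) (v : 'cV[R]_n).
Hypothesis lower0 : A *m v = 0.
Hypothesis lowerS : forall k, A *m (B ^+ k.+1 *m v) = beta k *: (B ^+ k *m v).

Local Notation e := (ladder_coef_ext beta).
Local Notation w k := (B ^+ k *m v).

Lemma ladder_step m l :
  e m.+1 l.+1 *: w (m.+1 - 2 * l.+1) =
  e m l.+1 *: w (m - 2 * l.+1).+1 + e m l *: (A *m w (m - 2 * l)).
Proof.
have [le_m_2l | lt_2l_m] := leqP m (2 * l).
  have /eqP-> : (m - 2 * l == 0)%N by rewrite subn_eq0.
  rewrite expr0 mul1mx lower0 scaler0 addr0.
  by rewrite !ladder_coef_ext_small ?scale0r //; lia.
have [j m_eq] : exists j, m = (2 * l + j).+1 by exists (m - 2 * l).-1; lia.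
have -> : (m.+1 - 2 * l.+1 = j)%N by lia.
have -> : (m - 2 * l = j.+1)%N by lia.
rewrite lowerS scalerA [_ * beta j]mulrC.
have -> : e m l = ladder_coef beta l j.+1 by rewrite m_eq -addnS ladder_coef_ext_addn.
have -> : m.+1 = (2 * l.+1 + j)%N by lia.
rewrite ladder_coef_ext_addn.
case: j m_eq => [|j] m_eq.
  by rewrite ladder_coef_ext_small ?scale0r ?add0r ?ladder_coefS0 //; lia.
have -> : m = (2 * l.+1 + j)%N by lia.
by rewrite ladder_coef_ext_addn addKn ladder_coefSS scalerDl.
Qed.

(* Summing over any K > m/2 rather than exactly m./2.+1 avoids a parity case split. *)
Lemma ladder_expansion_ext m K : (m < 2 * K)%N ->
  (A + B) ^+ m *m v = \sum_(l < K) e m l *: w (m - 2 * l).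
Proof.
have raise k : B *m w k = w k.+1 by rewrite exprS mulmxA.
elim: m K => [|m IH] [|K] lt_m_2K //.
  rewrite big_ord_recl big1 => [|l _]; last by rewrite ladder_coef_ext_small ?scale0r.
  by rewrite expr0 mul1mx scale1r addr0.
rewrite exprS -mulmxA (IH K.+1); last by lia.
rewrite mulmx_sumr.
under eq_bigr do rewrite -scalemxAr mulmxDl raise scalerDr.
rewrite big_split /= [X in _ + X = _]big_ord_recl [RHS]big_ord_recl.
under [X in _ + (_ + X) = _]eq_bigr do rewrite lift0.
under [X in _ = _ + X]eq_bigr do rewrite lift0 ladder_step.
rewrite big_split [X in X + _ = _]big_ord_recr /=.
have -> : (m - 2 * K = 0)%N by lia.
rewrite expr0 mul1mx lower0 scaler0 addr0 addrCA /ladder_coef_ext !muln0 !subn0 /=.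
by congr (_ + _); rewrite addrC.
Qed.

Lemma ladder_expansion m :
  (A + B) ^+ m *m v =
  \sum_(l < m./2.+1) ladder_coef beta l (m - 2 * l) *: w (m - 2 * l).
Proof.
have m_half := odd_double_half m.
rewrite (@ladder_expansion_ext m m./2.+1); last by lia.
apply: eq_bigr => l _; rewrite /ladder_coef_ext ifT //.
by have := ltn_ord l; lia.
Qed.

End LadderExpansion.

Lemma nested_ladder_coef (C : numClosedFieldType) (beta : nat -> C) l s :
  nested beta l s = ladder_coef beta l s.+1.
Proof.
elim: l s => [|l IH] s //=.
by apply: eq_bigr => t _; rewrite IH.
Qed.

Lemma coefE (C : numClosedFieldType) (beta : nat -> C) m l :
  coef beta m l = ladder_coef beta l (m - 2 * l).
Proof.
case: l => [|l] //=.
by apply: eq_bigr => s _; rewrite nested_ladder_coef.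
Qed.

Section BosonLadder.

Variables (C : numClosedFieldType) (N : nat) (beta : nat -> C).
Hypothesis beta_gt0 : forall n, (n < N)%N -> 0 < beta n.
Hypothesis beta_eq0 : forall s, (N <= s)%N -> beta s = 0.
Variable A : 'M[C]_(N.+1).
Hypothesis A_Psi0 : A *m Psi N 0 = 0.
Hypothesis A_PsiS : forall n, (n < N)%N -> A *m Psi N n.+1 = sqrtC (beta n) *: Psi N n.

Lemma beta_ge0 n : 0 <= beta n.
Proof. by have [/beta_gt0/ltW | /beta_eq0->] := ltnP n N. Qed.

Lemma PsiE n (i : 'I_N.+1) : (n <= N)%N -> @Psi C N n i 0 = (i == n :> nat)%:R.
Proof. by move=> le_nN; rewrite mxE andbT -val_eqE /= inordK. Qed.

Lemma mulmx_Psi_entry (M : 'M[C]_N.+1) i n : (M *m Psi N n) i 0 = M i (inord n).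
Proof. by rewrite -colE mxE. Qed.

Lemma A_entry i j : A i j = sqrtC (beta i) * (j == i.+1 :> nat)%:R.
Proof.
have -> : A i j = (A *m Psi N j) i 0 by rewrite mulmx_Psi_entry inord_val.
case: j => [[|k] lt_kN] /=; first by rewrite A_Psi0 mxE mulr0.
rewrite A_PsiS // mxE PsiE; last exact: ltnW.
by rewrite eqSS eq_sym; case: eqP => [->|]; rewrite ?mulr0.
Qed.

Lemma adjoint_trmx : adjoint A = A^T.
Proof.
apply/matrixP => i j; rewrite !mxE geC0_conj // A_entry.
by rewrite mulr_ge0 ?sqrtC_ge0 ?beta_ge0.
Qed.

(* For n = N, [Psi N N.+1] is a junk vector, but its coefficient sqrtC (beta N) is 0. *)
Lemma adjoint_Psi n : (n <= N)%N ->
  adjoint A *m Psi N n = sqrtC (beta n) *: Psi N n.+1.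
Proof.
move=> le_nN; apply/matrixP => i j; rewrite ord1 mulmx_Psi_entry adjoint_trmx.
rewrite mxE A_entry inordK // mxE.
have [lt_nN | ge_nN] := ltnP n N; first by rewrite PsiE.
by rewrite beta_eq0 // sqrtC0 !mul0r.
Qed.

Lemma prod_sqrt_beta_eq0 k : (N < k)%N -> \prod_(j < k) sqrtC (beta j) = 0.
Proof.
move=> lt_Nk; rewrite (bigD1 (Ordinal lt_Nk)) //=.
by rewrite beta_eq0 // sqrtC0 mul0r.
Qed.

Lemma adjoint_pow_Psi0 k :
  adjoint A ^+ k *m Psi N 0 = (\prod_(j < k) sqrtC (beta j)) *: Psi N k.
Proof.
elim: k => [|k IH]; first by rewrite expr0 mul1mx big_ord0 scale1r.
rewrite exprS -mulmxA IH -scalemxAr.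
have [le_kN | lt_Nk] := leqP k N.
  by rewrite adjoint_Psi // scalerA big_ord_recr.
by rewrite !prod_sqrt_beta_eq0 ?scale0r ?scaler0 //; apply: ltnW.
Qed.

Lemma lower_adjoint_pow k :
  A *m (adjoint A ^+ k.+1 *m Psi N 0) = beta k *: (adjoint A ^+ k *m Psi N 0).
Proof.
rewrite !adjoint_pow_Psi0 -scalemxAr.
have [lt_kN | le_Nk] := ltnP k N.
  by rewrite A_PsiS // big_ord_recr !scalerA /= -mulrA -expr2 sqrtCK mulrC.
by rewrite prod_sqrt_beta_eq0 // beta_eq0 // !scale0r.
Qed.

End BosonLadder.

Theorem theorem1 (C : numClosedFieldType) (N : nat) (beta : nat -> C)
  (hpos : forall n : nat, (n < N)%N -> 0 < beta n)
  (hzero : forall s : nat, (N <= s)%N -> beta s = 0)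
  (A : 'M[C]_(N.+1))
  (hA0 : A *m Psi N 0 = 0)
  (hA : forall n : nat, (n < N)%N ->
          A *m Psi N n.+1 = sqrtC (beta n) *: Psi N n)
  (m : nat) :
  (A + adjoint A) ^+ m *m Psi N 0 =
  \sum_(l < (m./2).+1) coef beta m l *: (adjoint A ^+ (m - 2 * l) *m Psi N 0).
Proof.
rewrite (ladder_expansion hA0 (lower_adjoint_pow hpos hzero hA0 hA)).
by apply: eq_bigr => l _; rewrite coefE.
Qed.
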